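(* For every integer $d\ge2$, the subgroup $V_{[0,1/d)}$ is not co-amenable in $V_d$, and $T_{[0,1/d)}$ is not co-amenable in $T_d$. In particular the quasi-regular representations $\ell^2(V_d/V_{[0,1/d)})$ of $V_d$ and $\ell^2(T_d/T_{[0,1/d)})$ of $T_d$ are non-amenable.
   Context: $V_d$ is the Higman–Thompson group (piecewise affine bijections of $[0,1)$ with finitely many $d$-adic breakpoints and slopes powers of $d$), $T_d\le V_d$ the subgroup of elements inducing homeomorphisms of the circle $[0,1]/(0\sim1)$. $V_{[0,1/d)}$ (resp. $T_{[0,1/d)}$) denotes the subgroup of elements of $V_d$ (resp. $T_d$) acting as the identity on $[0,1/d)$. A subgroup $H\le G$ is co-amenable if there is a $G$-invariant mean on $\ell^\infty(G/H)$. *)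

From Stdlib Require Import Reals Lra Lia ZArith.
Open Scope R_scope.

Definition dadic (d : nat) (x : R) : Prop :=
  exists (m : Z) (k : nat), x = IZR m / (INR d ^ k).

Definition In01 (x : R) : Prop := 0 <= x < 1.

Definition pw_affine (d : nat) (f : R -> R) : Prop :=
  exists (n : nat) (a : nat -> R),
    a 0%nat = 0 /\ a n = 1 /\
    (forall i, (i < n)%nat -> a i < a (S i)) /\
    (forall i, (i <= n)%nat -> dadic d (a i)) /\
    (forall i, (i < n)%nat -> exists (k : Z) (b : R),
        forall x, a i <= x < a (S i) -> f x = powerRZ (INR d) k * x + b).

(* Elements of V_d are represented as maps R -> R that are the identity
   outside [0,1); group law = composition. *)
Definition inV (d : nat) (f : R -> R) : Prop :=
  (forall x, ~ In01 x -> f x = x) /\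
  (forall x, In01 x -> In01 (f x)) /\
  (forall x y, In01 x -> In01 y -> f x = f y -> x = y) /\
  (forall y, In01 y -> exists x, In01 x /\ f x = y) /\
  pw_affine d f.

(* distance on the circle [0,1]/(0~1), points represented in [0,1) *)
Definition cdist (x y : R) : R := Rmin (Rabs (x - y)) (1 - Rabs (x - y)).

Definition circ_continuous (f : R -> R) : Prop :=
  forall x, In01 x -> forall eps, 0 < eps -> exists delta, 0 < delta /\
    forall y, In01 y -> cdist x y < delta -> cdist (f x) (f y) < eps.

Definition inT (d : nat) (f : R -> R) : Prop :=
  inV d f /\ circ_continuous f /\
  exists g : R -> R,
    (forall y, In01 y -> In01 (g y)) /\
    (forall x, In01 x -> g (f x) = x) /\
    (forall y, In01 y -> f (g y) = y) /\
    circ_continuous g.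

Definition fixes_first (d : nat) (f : R -> R) : Prop :=
  forall x, 0 <= x < 1 / INR d -> f x = x.

Definition inVfix (d : nat) (f : R -> R) : Prop := inV d f /\ fixes_first d f.
Definition inTfix (d : nat) (f : R -> R) : Prop := inT d f /\ fixes_first d f.

(* l^infty(G/H), identified with bounded functions on G that are constant
   on left cosets gH. G, H are given as predicates on R -> R with group law
   composition (fun x => g (h x)). *)
Definition linfGH (G H : (R -> R) -> Prop) (phi : (R -> R) -> R) : Prop :=
  (exists M, forall g, G g -> Rabs (phi g) <= M) /\
  (forall g h, G g -> H h -> phi (fun x => g (h x)) = phi g).

Definition coamenable (G H : (R -> R) -> Prop) : Prop :=
  exists m : ((R -> R) -> R) -> R,
    (forall (c : R) phi psi, linfGH G H phi -> linfGH G H psi ->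
        m (fun g => c * phi g + psi g) = c * m phi + m psi) /\
    (forall phi, linfGH G H phi -> (forall g, G g -> 0 <= phi g) -> 0 <= m phi) /\
    m (fun _ => 1) = 1 /\
    (forall g0 phi, G g0 -> linfGH G H phi ->
        m (fun g => phi (fun x => g0 (g x))) = m phi).

From Stdlib Require Import Reals Lra Lia ZArith FunctionalExtensionality.
Open Scope R_scope.

(* An invariant mean on l^infty(G/H), with H fixing the point 0, induces via
   g |-> g 0 a finitely additive probability on [0,1) which is invariant under
   the action of G on intervals.  The rotation by 1/d^2 forces every interval
   [j/d^2, (j+1)/d^2) to have the same mass c, so d^2 c = 1.  The element of
   T_d mapping [1/d, 1/d + 1/d^2) affinely onto [0, 1/d) forces c = d c, hence
   c = 0, a contradiction. *)

Ltac case_R_dec := repeat match goal with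
  | |- context [Rlt_dec ?a ?b] => destruct (Rlt_dec a b)
  | |- context [Rle_dec ?a ?b] => destruct (Rle_dec a b) end.

Definition indic (a b y : R) : R :=
  if Rle_dec a y then if Rlt_dec y b then 1 else 0 else 0.

Lemma Rabs_indic_le1 a b y : Rabs (indic a b y) <= 1.
Proof. unfold indic; case_R_dec; rewrite ?Rabs_R1, ?Rabs_R0; lra. Qed.

Lemma indic_split a b c y : a <= b -> b <= c -> indic a c y = indic a b y + indic b c y.
Proof. intros; unfold indic; case_R_dec; lra. Qed.

Section OrbitMass.

Variables (G H : (R -> R) -> Prop) (m : ((R -> R) -> R) -> R).

Hypothesis H_fixes_0 : forall h, H h -> h 0 = 0.
Hypothesis G_orbit_0 : forall g, G g -> In01 (g 0).

Hypothesis m_linear : forall (c : R) phi psi, linfGH G H phi -> linfGH G H psi ->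
  m (fun g => c * phi g + psi g) = c * m phi + m psi.
Hypothesis m_positive : forall phi, linfGH G H phi ->
  (forall g, G g -> 0 <= phi g) -> 0 <= m phi.
Hypothesis m_normalized : m (fun _ => 1) = 1.
Hypothesis m_invariant : forall g0 phi, G g0 -> linfGH G H phi ->
  m (fun g => phi (fun x => g0 (g x))) = m phi.

Lemma linfGH_orbit (F : R -> R) :
  (forall y, Rabs (F y) <= 1) -> linfGH G H (fun g => F (g 0)).
Proof.
  intros F_bounded; split.
  - exists 1; intros; apply F_bounded.
  - intros g h _ Hh; rewrite H_fixes_0; auto.
Qed.

Lemma linfGH_comb (c : R) phi psi : linfGH G H phi -> linfGH G H psi ->
  linfGH G H (fun g => c * phi g + psi g).
Proof.
  intros [[M1 HM1] inv1] [[M2 HM2] inv2]; split.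
  - exists (Rabs c * M1 + M2); intros g Hg.
    eapply Rle_trans; [apply Rabs_triang|]; rewrite Rabs_mult.
    assert (Rabs c * Rabs (phi g) <= Rabs c * M1)
      by (apply Rmult_le_compat_l; [apply Rabs_pos | apply HM1; auto]).
    specialize (HM2 g Hg); lra.
  - intros g h Hg Hh; rewrite inv1, inv2; auto.
Qed.

Lemma mean_ext phi psi : linfGH G H phi -> linfGH G H psi ->
  (forall g, G g -> phi g = psi g) -> m phi = m psi.
Proof.
  intros Lphi Lpsi E.
  assert (le1 := m_positive _ (linfGH_comb (-1) phi psi Lphi Lpsi)).
  assert (le2 := m_positive _ (linfGH_comb (-1) psi phi Lpsi Lphi)).
  rewrite m_linear in le1, le2 by auto.
  assert (0 <= -1 * m phi + m psi) by (apply le1; intros g Hg; rewrite E; auto; lra).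
  assert (0 <= -1 * m psi + m phi) by (apply le2; intros g Hg; rewrite E; auto; lra).
  lra.
Qed.

Definition orbit_mass (a b : R) : R := m (fun g => indic a b (g 0)).

Lemma orbit_mass_additive a b c : a <= b -> b <= c ->
  orbit_mass a c = orbit_mass a b + orbit_mass b c.
Proof.
  intros Hab Hbc; unfold orbit_mass.
  replace (fun g : R -> R => indic a c (g 0))
    with (fun g : R -> R => 1 * indic a b (g 0) + indic b c (g 0))
    by (extensionality g; rewrite (indic_split a b c); auto; ring).
  rewrite m_linear by (apply linfGH_orbit, Rabs_indic_le1); ring.
Qed.

Lemma orbit_mass_full : orbit_mass 0 1 = 1.
Proof.
  rewrite <- m_normalized; unfold orbit_mass; apply mean_ext.
  - apply linfGH_orbit, Rabs_indic_le1.
  - apply (linfGH_orbit (fun _ => 1)); intros; rewrite Rabs_R1; lra.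
  - intros g Hg; destruct (G_orbit_0 g Hg); unfold indic; case_R_dec; lra.
Qed.

Lemma orbit_mass_transport (f : R -> R) a b a' b' : G f ->
  (forall y, In01 y -> indic a b (f y) = indic a' b' y) ->
  orbit_mass a' b' = orbit_mass a b.
Proof.
  intros Gf f_maps; unfold orbit_mass.
  rewrite <- (m_invariant f (fun g => indic a b (g 0)))
    by (auto; apply linfGH_orbit, Rabs_indic_le1).
  apply mean_ext.
  - apply linfGH_orbit, Rabs_indic_le1.
  - apply (linfGH_orbit (fun y => indic a b (f y))); intros; apply Rabs_indic_le1.
  - intros g Hg; symmetry; apply f_maps, G_orbit_0; auto.
Qed.

Variables (s : R -> R) (t : R).

Hypothesis t_pos : 0 < t.
Hypothesis G_s : G s.
Hypothesis s_shifts : forall y, In01 y -> forall a b, t <= a -> b <= 1 ->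
  indic a b (s y) = indic (a - t) (b - t) y.

Lemma orbit_mass_cell (j : nat) : (INR j + 1) * t <= 1 ->
  orbit_mass (INR j * t) ((INR j + 1) * t) = orbit_mass 0 t.
Proof.
  induction j as [|j IHj]; intros Hj.
  - simpl; f_equal; ring.
  - rewrite S_INR in *; assert (0 <= INR j) by apply pos_INR.
    rewrite <- IHj by nra; symmetry.
    apply (orbit_mass_transport s); auto.
    intros y Hy; rewrite s_shifts by (auto; nra); f_equal; ring.
Qed.

Lemma orbit_mass_grid (n : nat) : INR n * t <= 1 ->
  orbit_mass 0 (INR n * t) = INR n * orbit_mass 0 t.
Proof.
  induction n as [|n IHn]; intros Hn.
  - simpl; rewrite Rmult_0_l; pose proof (orbit_mass_additive 0 0 0); lra.
  - rewrite S_INR in *; assert (0 <= INR n) by apply pos_INR.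
    rewrite (orbit_mass_additive 0 (INR n * t)) by nra.
    rewrite IHn, orbit_mass_cell by nra; ring.
Qed.

End OrbitMass.

Lemma not_coamenable_of_shift_and_expansion (G H : (R -> R) -> Prop)
    (s v : R -> R) (t : R) (N k j : nat) :
  (forall h, H h -> h 0 = 0) -> (forall g, G g -> In01 (g 0)) ->
  0 < t -> INR N * t = 1 -> G s ->
  (forall y, In01 y -> forall a b, t <= a -> b <= 1 ->
     indic a b (s y) = indic (a - t) (b - t) y) ->
  k <> 1%nat -> INR k * t <= 1 -> (INR j + 1) * t <= 1 -> G v ->
  (forall y, In01 y -> indic 0 (INR k * t) (v y) = indic (INR j * t) ((INR j + 1) * t) y) ->
  ~ coamenable G H.
Proof.
  intros H_fix G_orb t_pos Nt Gs s_shifts k_neq1 kt jt Gv v_expands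
    [m [m_lin [m_pos [m_one m_inv]]]].
  set (c := orbit_mass m 0 t).
  assert (cell : orbit_mass m (INR j * t) ((INR j + 1) * t) = c)
    by (apply (orbit_mass_cell G H) with s; auto).
  assert (grid_k : orbit_mass m 0 (INR k * t) = INR k * c)
    by (apply (orbit_mass_grid G H) with s; auto).
  assert (grid_N : orbit_mass m 0 (INR N * t) = INR N * c)
    by (apply (orbit_mass_grid G H) with s; auto; lra).
  assert (stretch : orbit_mass m (INR j * t) ((INR j + 1) * t) = orbit_mass m 0 (INR k * t))
    by (apply (orbit_mass_transport G H) with v; auto).
  assert (full : orbit_mass m 0 1 = 1) by (apply (orbit_mass_full G H); auto).
  assert (c_zero : c = 0).
  { assert (INR k - 1 <> 0) by (pose proof (not_1_INR k k_neq1); lra).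
    apply (Rmult_eq_reg_l (INR k - 1)); auto; lra. }
  rewrite Nt, full, c_zero in grid_N; lra.
Qed.

Definition on01 (f : R -> R) (x : R) : R :=
  if Rle_dec 0 x then if Rlt_dec x 1 then f x else x else x.

Lemma on01_in f x : In01 x -> on01 f x = f x.
Proof. intros [? ?]; unfold on01; case_R_dec; lra. Qed.

Lemma on01_out f x : ~ In01 x -> on01 f x = x.
Proof. unfold on01, In01; intros Hx; case_R_dec; auto; exfalso; apply Hx; lra. Qed.

Definition mono_lip_on (V : R -> R) (L a b : R) : Prop :=
  forall x y, a <= x -> x <= y -> y <= b -> 0 <= V y - V x <= L * (y - x).

Lemma mono_lip_on_affine V L a b k q : 0 <= k <= L ->
  (forall z, a <= z <= b -> V z = k * z + q) -> mono_lip_on V L a b.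
Proof. intros Hk HV x y Hx Hxy Hy; rewrite !HV by lra; nra. Qed.

Lemma mono_lip_on_concat V L a b c : a <= b <= c ->
  mono_lip_on V L a b -> mono_lip_on V L b c -> mono_lip_on V L a c.
Proof.
  intros Hb H1 H2 x y Hx Hxy Hy.
  destruct (Rle_dec y b); [apply H1; lra|].
  destruct (Rle_dec b x); [apply H2; lra|].
  specialize (H1 x b ltac:(lra) ltac:(lra) ltac:(lra)).
  specialize (H2 b y ltac:(lra) ltac:(lra) ltac:(lra)); lra.
Qed.

Lemma cdist_sym x y : cdist x y = cdist y x.
Proof. unfold cdist; rewrite Rabs_minus_sym; auto. Qed.

Lemma circ_continuous_ext f g :
  (forall x, In01 x -> f x = g x) -> circ_continuous f -> circ_continuous g.
Proof.
  intros E Hf x Hx eps Heps.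
  destruct (Hf x Hx eps Heps) as [delta [Hdelta Hclose]].
  exists delta; split; auto; intros y Hy Hxy; rewrite <- !E by auto; auto.
Qed.

(* V is a lift of f to the universal cover of the circle, of degree one and
   monotone, so f is L-Lipschitz for the circle distance. *)
Section CircleLift.

Variables (f V : R -> R) (L : R).

Hypothesis L_pos : 0 < L.
Hypothesis f_maps01 : forall x, In01 x -> In01 (f x).
Hypothesis V_lifts_f : forall x, In01 x -> f x = V x \/ f x = V x - 1.
Hypothesis V_degree1 : V 1 = V 0 + 1.
Hypothesis V_mono_lip : mono_lip_on V L 0 1.

Lemma cdist_le_of_lift x y : In01 x -> In01 y -> x <= y ->
  cdist (f x) (f y) <= L * cdist x y.
Proof.
  intros Hx Hy Hxy.
  pose proof (f_maps01 x Hx); pose proof (f_maps01 y Hy); unfold In01 in *.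
  pose proof (V_mono_lip x y ltac:(lra) ltac:(lra) ltac:(lra)).
  pose proof (V_mono_lip 0 x ltac:(lra) ltac:(lra) ltac:(lra)).
  pose proof (V_mono_lip y 1 ltac:(lra) ltac:(lra) ltac:(lra)).
  assert (Rabs (f x - f y) = V y - V x \/ Rabs (f x - f y) = 1 - (V y - V x)) as Habs.
  { destruct (V_lifts_f x Hx) as [Ex|Ex], (V_lifts_f y Hy) as [Ey|Ey];
      rewrite Ex, Ey in *.
    - left; rewrite Rabs_left1; lra.
    - right; rewrite Rabs_right; lra.
    - lra.
    - left; rewrite Rabs_left1; lra. }
  assert (Hxy_dist : cdist x y = Rmin (y - x) (1 - (y - x)))
    by (unfold cdist; rewrite (Rabs_left1 (x - y)) by lra; f_equal; ring).
  rewrite Hxy_dist; unfold cdist.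
  pose proof (Rmin_l (Rabs (f x - f y)) (1 - Rabs (f x - f y))).
  pose proof (Rmin_r (Rabs (f x - f y)) (1 - Rabs (f x - f y))).
  unfold Rmin at 2; destruct Rle_dec; lra.
Qed.

Lemma circ_continuous_of_lift : circ_continuous f.
Proof.
  intros x Hx eps Heps; exists (eps / L); split; [apply Rdiv_lt_0_compat; auto|].
  intros y Hy Hd.
  assert (cdist (f x) (f y) <= L * cdist x y).
  { destruct (Rle_dec x y); [apply cdist_le_of_lift; auto|].
    rewrite cdist_sym, (cdist_sym x); apply cdist_le_of_lift; auto; lra. }
  assert (L * cdist x y < L * (eps / L)) by (apply Rmult_lt_compat_l; auto).
  replace (L * (eps / L)) with eps in * by (field; lra); lra.
Qed.

End CircleLift.

Lemma inT_on01 (d : nat) (f g : R -> R) :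
  (forall x, In01 x -> In01 (f x)) -> (forall y, In01 y -> In01 (g y)) ->
  (forall x, In01 x -> g (f x) = x) -> (forall y, In01 y -> f (g y) = y) ->
  pw_affine d (on01 f) -> circ_continuous f -> circ_continuous g ->
  inT d (on01 f).
Proof.
  intros f01 g01 gf fg pw cont_f cont_g.
  assert (on01_f : forall x, In01 x -> f x = on01 f x) by (intros; rewrite on01_in; auto).
  assert (on01_g : forall x, In01 x -> g x = on01 g x) by (intros; rewrite on01_in; auto).
  split; [split; [|split; [|split; [|split]]] | split].
  - apply on01_out.
  - intros x Hx; rewrite on01_in; auto.
  - intros x y Hx Hy E; rewrite <- !on01_f in E by auto.
    rewrite <- (gf x Hx), <- (gf y Hy), E; auto.
  - intros y Hy; exists (g y); rewrite on01_in; auto.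
  - auto.
  - apply (circ_continuous_ext f); auto.
  - exists (on01 g); split; [|split; [|split]].
    + intros; rewrite on01_in; auto.
    + intros x Hx; rewrite <- on01_f, <- on01_g; auto.
    + intros y Hy; rewrite <- on01_g, <- on01_f; auto.
    + apply (circ_continuous_ext g); auto.
Qed.

Lemma dadic_0 d : dadic d 0.
Proof. exists 0%Z, 0%nat; simpl; field. Qed.

Lemma dadic_1 d : dadic d 1.
Proof. exists 1%Z, 0%nat; simpl; field. Qed.

Lemma pw_affine_on01_three (d : nat) (f : R -> R) (a1 a2 : R) (k0 k1 k2 : Z) (b0 b1 b2 : R) :
  0 < a1 -> a1 < a2 -> a2 < 1 -> dadic d a1 -> dadic d a2 ->
  (forall x, 0 <= x < a1 -> f x = powerRZ (INR d) k0 * x + b0) ->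
  (forall x, a1 <= x < a2 -> f x = powerRZ (INR d) k1 * x + b1) ->
  (forall x, a2 <= x < 1 -> f x = powerRZ (INR d) k2 * x + b2) ->
  pw_affine d (on01 f).
Proof.
  intros a1_pos a12 a2_lt1 dadic_a1 dadic_a2 piece0 piece1 piece2.
  exists 3%nat, (fun i => match i with 0%nat => 0 | 1%nat => a1 | 2%nat => a2 | _ => 1 end).
  split; [reflexivity|]; split; [reflexivity|]; split; [|split].
  - intros i Hi; destruct i as [|[|[|i]]]; [lra | lra | lra | lia].
  - intros i Hi; destruct i as [|[|[|[|i]]]]; auto using dadic_0, dadic_1; lia.
  - intros i Hi; destruct i as [|[|[|i]]];
      [exists k0, b0 | exists k1, b1 | exists k2, b2 | lia];
      intros x Hx; rewrite on01_in by (unfold In01; lra); auto.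
Qed.

Section Generators.

Variable d : nat.
Hypothesis d_ge2 : (2 <= d)%nat.

Local Notation D := (INR d).
Local Notation e := (/ INR d).

Lemma INR_ge2 : 2 <= D.
Proof. replace 2 with (INR 2) by (simpl; lra); apply le_INR; auto. Qed.

Lemma INR_mul_inv : D * e = 1.
Proof. apply Rinv_r; pose proof INR_ge2; lra. Qed.

Lemma inv_INR_pos : 0 < e.
Proof. apply Rinv_0_lt_compat; pose proof INR_ge2; lra. Qed.

Lemma inv_INR_le_half : e <= 1 / 2.
Proof. pose proof INR_ge2; pose proof INR_mul_inv; pose proof inv_INR_pos; nra. Qed.

Lemma INR_mul_inv2 : D * (e * e) = e.
Proof. rewrite <- Rmult_assoc, INR_mul_inv; ring. Qed.

Ltac scale_facts :=
  pose proof INR_ge2; pose proof INR_mul_inv; pose proof inv_INR_pos;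
  pose proof inv_INR_le_half; pose proof INR_mul_inv2.

Lemma dadic_inv : dadic d e.
Proof. pose proof INR_ge2; exists 1%Z, 1%nat; simpl; field; lra. Qed.

Lemma dadic_inv_add_inv2 : dadic d (e + e * e).
Proof.
  pose proof INR_ge2; exists (Z.of_nat d + 1)%Z, 2%nat.
  rewrite plus_IZR, <- INR_IZR_INZ; simpl; field; lra.
Qed.

Lemma dadic_1_sub_inv2 : dadic d (1 - e * e).
Proof.
  pose proof INR_ge2; exists (Z.of_nat d * Z.of_nat d - 1)%Z, 2%nat.
  rewrite minus_IZR, mult_IZR, <- INR_IZR_INZ; simpl; field; lra.
Qed.

Definition rot (y : R) : R :=
  if Rlt_dec y (1 - e * e) then y + e * e else y + e * e - 1.

Definition rot_inv (y : R) : R :=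
  if Rlt_dec y (e * e) then y - e * e + 1 else y - e * e.

Lemma rot_inT : inT d (on01 rot).
Proof.
  scale_facts; apply (inT_on01 d rot rot_inv); unfold In01, rot, rot_inv.
  - intros; case_R_dec; nra.
  - intros; case_R_dec; nra.
  - intros; case_R_dec; nra.
  - intros; case_R_dec; nra.
  - apply (pw_affine_on01_three d rot e (1 - e * e) 0 0 0 (e * e) (e * e) (e * e - 1));
      auto using dadic_inv, dadic_1_sub_inv2; try nra;
      intros x Hx; unfold rot; simpl powerRZ; case_R_dec; nra.
  - apply (circ_continuous_of_lift rot (fun x => x + e * e) 1); unfold In01, rot;
      [lra | intros; case_R_dec; nra | intros; case_R_dec; lra | lra |].
    apply (mono_lip_on_affine _ _ _ _ 1 (e * e)); intros; lra.
  - apply (circ_continuous_of_lift rot_inv (fun x => x - e * e + 1) 1); unfold In01, rot_inv;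
      [lra | intros; case_R_dec; nra | intros; case_R_dec; lra | lra |].
    apply (mono_lip_on_affine _ _ _ _ 1 (1 - e * e)); intros; lra.
Qed.

Lemma rot_shifts y a b : In01 y -> e * e <= a -> b <= 1 ->
  indic a b (on01 rot y) = indic (a - e * e) (b - e * e) y.
Proof.
  intros Hy Ha Hb; rewrite on01_in by auto; scale_facts.
  unfold In01 in Hy; unfold rot, indic; case_R_dec; lra.
Qed.

Definition expand (y : R) : R :=
  if Rlt_dec y e then e * y + 1 - e * e
  else if Rlt_dec y (e + e * e) then D * y - 1 else y - e * e.

Definition expand_inv (y : R) : R :=
  if Rlt_dec y e then e * y + e
  else if Rlt_dec y (1 - e * e) then y + e * e else D * y - D + e.

Definition expand_lift (x : R) : R :=
  if Rle_dec x e then e * x + 1 - e * e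
  else if Rle_dec x (e + e * e) then D * x else x - e * e + 1.

Definition expand_inv_lift (y : R) : R :=
  if Rle_dec y e then e * y + e
  else if Rle_dec y (1 - e * e) then y + e * e else D * y - D + e + 1.

Lemma expand_lift_mono_lip : mono_lip_on expand_lift D 0 1.
Proof.
  scale_facts.
  apply (mono_lip_on_concat _ _ 0 e 1); [nra| |apply (mono_lip_on_concat _ _ e (e + e * e) 1)];
    [| nra | |]; [apply (mono_lip_on_affine _ _ _ _ e (1 - e * e))
                 |apply (mono_lip_on_affine _ _ _ _ D 0)
                 |apply (mono_lip_on_affine _ _ _ _ 1 (1 - e * e))];
    try nra; intros z Hz; unfold expand_lift; case_R_dec; nra.
Qed.

Lemma expand_inv_lift_mono_lip : mono_lip_on expand_inv_lift D 0 1.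
Proof.
  scale_facts.
  apply (mono_lip_on_concat _ _ 0 e 1); [nra| |apply (mono_lip_on_concat _ _ e (1 - e * e) 1)];
    [| nra | |]; [apply (mono_lip_on_affine _ _ _ _ e e)
                 |apply (mono_lip_on_affine _ _ _ _ 1 (e * e))
                 |apply (mono_lip_on_affine _ _ _ _ D (- D + e + 1))];
    try nra; intros z Hz; unfold expand_inv_lift; case_R_dec; nra.
Qed.

Lemma expand_inT : inT d (on01 expand).
Proof.
  scale_facts; apply (inT_on01 d expand expand_inv); unfold In01, expand, expand_inv.
  - intros; case_R_dec; nra.
  - intros; case_R_dec; nra.
  - intros; case_R_dec; nra.
  - intros; case_R_dec; nra.
  - apply (pw_affine_on01_three d expand e (e + e * e) (-1) 1 0 (1 - e * e) (-1) (- e * e));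
      auto using dadic_inv, dadic_inv_add_inv2; try nra; intros x Hx; unfold expand;
      [replace (powerRZ D (-1)) with e by (simpl; field; lra)
      |replace (powerRZ D 1) with D by (simpl; ring)
      |simpl powerRZ]; case_R_dec; nra.
  - apply (circ_continuous_of_lift expand expand_lift D); unfold In01, expand, expand_lift;
      [lra | intros; case_R_dec; nra | intros; case_R_dec; nra | case_R_dec; nra |].
    apply expand_lift_mono_lip.
  - apply (circ_continuous_of_lift expand_inv expand_inv_lift D);
      unfold In01, expand_inv, expand_inv_lift;
      [lra | intros; case_R_dec; nra | intros; case_R_dec; nra | case_R_dec; nra |].
    apply expand_inv_lift_mono_lip.
Qed.

Lemma expand_stretches y : In01 y ->
  indic 0 (D * (e * e)) (on01 expand y) = indic (D * (e * e)) ((D + 1) * (e * e)) y.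
Proof.
  intros Hy; rewrite on01_in by auto; scale_facts.
  unfold In01 in Hy; unfold expand, indic; case_R_dec; nra.
Qed.

Lemma not_coamenable_between_T_and_V (G H : (R -> R) -> Prop) :
  (forall g, inT d g -> G g) -> (forall g, G g -> inV d g) ->
  (forall h, H h -> fixes_first d h) -> ~ coamenable G H.
Proof.
  intros T_sub_G G_sub_V H_fixes; scale_facts.
  apply (not_coamenable_of_shift_and_expansion G H (on01 rot) (on01 expand) (e * e) (d * d) d d).
  - intros h Hh; apply H_fixes; auto; unfold Rdiv; lra.
  - intros g Gg; destruct (G_sub_V g Gg) as [_ [maps01 _]]; apply maps01; unfold In01; lra.
  - nra.
  - rewrite mult_INR; replace (D * D * (e * e)) with ((D * e) * (D * e)) by ring; nra.
  - apply T_sub_G, rot_inT.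
  - intros; apply rot_shifts; auto.
  - lia.
  - nra.
  - nra.
  - apply T_sub_G, expand_inT.
  - apply expand_stretches.
Qed.

End Generators.

Theorem lemma5p6 : forall d : nat, (2 <= d)%nat ->
  ~ coamenable (inV d) (inVfix d) /\ ~ coamenable (inT d) (inTfix d).
Proof.
  intros d Hd; split; apply (not_coamenable_between_T_and_V d); auto.
  - intros g [Vg _]; exact Vg.
  - intros h [_ fix_h]; exact fix_h.
  - intros g [Vg _]; exact Vg.
  - intros h [_ fix_h]; exact fix_h.
Qed.
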